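(* Let $a=(a_i)_{i\in\mathbb Z}$ be any sequence of complex numbers and let $\mu=(p_1,\dots,p_d\mid q_1,\dots,q_d)$ be a Young diagram in Frobenius notation. Then $s_{\mu;a}=\det[s_{(p_i\mid q_j);a}]_{i,j=1}^d$ (Giambelli formula), where $(p\mid q)$ denotes the hook diagram with Frobenius coordinates $p,q$.
   Context: $\Lambda$ is the algebra of symmetric functions over $\mathbb C$ with complete homogeneous $h_k$ and elementary $e_k$. For a sequence $a=(a_i)_{i\in\mathbb Z}$ define $h_{k;a}=\sum_{i=1}^k(-1)^{k-i}e_{k-i}(a_1,\dots,a_{k-1})h_i$ for $k\ge1$, $h_{0;a}=1$, $h_{k;a}=0$ for $k<0$; let $(\tau^ra)_i=a_{i+r}$; and set $s_{\mu;a}=\det[h_{\mu_i-i+j;\,\tau^{1-j}a}]_{i,j=1}^N$ for any $N\ge\ell(\mu)$. Frobenius notation: a Young diagram $\mu$ with $d$ diagonal boxes is written $(p_1,\dots,p_d\mid q_1,\dots,q_d)$ with $p_i=\mu_i-i$, $q_i=\mu'_i-i$, $\mu'$ the transposed diagram. *)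

From HB Require Import structures.
From mathcomp Require Import all_boot all_order all_algebra.
From mathcomp Require Import complex.
From mathcomp Require Import Rstruct.
From mathcomp Require Import mpoly.
Set Implicit Arguments. Unset Strict Implicit. Unset Printing Implicit Defensive.
Import Order.TTheory GRing.Theory Num.Theory.
Local Open Scope ring_scope.

Definition CC : fieldType := complex Rdefinitions.R.

(* A model of the algebra of symmetric functions: a commutative C-algebra A
   together with a family h : nat -> A (h k plays the role of the complete
   homogeneous symmetric function h_k, k >= 1) such that h_1, h_2, ... are
   algebraically independent over C.  Since Lambda = C[h_1, h_2, ...] freely,
   the subalgebra generated by the h_k is then a copy of Lambda. *)
Definition alg_indep (A : comAlgType CC) (h : nat -> A) : Prop :=
  forall (n : nat) (p : mpoly.mpoly n CC),
    mpoly.mmap (in_alg A) (fun i : 'I_n => h (nat_of_ord i).+1) p = 0 -> p = 0.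

Fixpoint esym_seq (k : nat) (s : seq CC) : CC :=
  match s with
  | [::] => if k is 0%N then 1 else 0
  | x :: s' => if k is k'.+1 then esym_seq k s' + x * esym_seq k' s'
               else 1
  end.

Definition tau (r : int) (a : int -> CC) : int -> CC := fun i => a (i + r).

Definition hk (A : comAlgType CC) (h : nat -> A) (k : int) (a : int -> CC) : A :=
  match k with
  | Posz 0 => 1
  | Posz k'.+1 =>
      \sum_(1 <= i < k'.+2)
        ((-1) ^+ (k'.+1 - i) * esym_seq (k'.+1 - i)
             [seq a (Posz j) | j <- iota 1 k']) *: h i
  | Negz _ => 0
  end.

Definition is_partition (mu : seq nat) : bool :=
  sorted geq mu && all (fun m => 0 < m)%N mu.

(* s_{mu;a} = det [ h_{mu_i - i + j; tau^{1-j} a} ]_{i,j=1}^N, here with N = l(mu)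
   (indices below are 0-based: row i, column j stand for i+1, j+1). *)
Definition schur_a (A : comAlgType CC) (h : nat -> A) (mu : seq nat) (a : int -> CC) : A :=
  \det (\matrix_(i < size mu, j < size mu)
          hk h ((nth 0%N mu i)%:Z - (i.+1)%:Z + (j.+1)%:Z)
                (tau (1 - (j.+1)%:Z) a)).

Definition conj_part (mu : seq nat) (j : nat) : nat := count (fun m => j <= m)%N mu.

Definition durfee (mu : seq nat) : nat :=
  count (fun i => i <= nth 0%N mu i.-1)%N (iota 1 (size mu)).

(* Frobenius coordinates (1-based i): p_i = mu_i - i, q_i = mu'_i - i. *)
Definition frob_p (mu : seq nat) (i : nat) : nat := (nth 0%N mu i.-1 - i)%N.
Definition frob_q (mu : seq nat) (i : nat) : nat := (conj_part mu i - i)%N.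

Definition hook (p q : nat) : seq nat := p.+1 :: nseq q 1%N.

(* Let [B] be the Jacobi-Trudi matrix of the empty partition, padded to [N]
   rows: it is upper unitriangular, so right multiplication by [B^-1] preserves
   the determinant of every [N x N] matrix.  Row [i] of the Jacobi-Trudi matrix
   of [mu] only depends on [mu_i - i]; below the Durfee square ([mu_i <= i]) it
   coincides with row [i - mu_i] of [B], hence becomes the unit row
   [e_(i - mu_i)] after multiplication by [B^-1], while the [d] rows above give
   reduced rows [c_i].  Laplace expansion along the unit rows leaves the minor of
   the [c_i] on the complementary columns, which are exactly the [q_j] (the
   classical complementarity of [{q_j}] and [{i - mu_i}]).  The same computation
   for the hook [(p_i | q)] gives [(-1)^q c_i(q)], and the signs match. *)

From HB Require Import structures.
From mathcomp Require Import all_boot all_order all_algebra.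
From mathcomp Require Import zify ring.
Set Implicit Arguments. Unset Strict Implicit. Unset Printing Implicit Defensive.
Import GRing.Theory.

Lemma perm_iotaS_split n ts ks : sorted gtn ts -> sorted ltn ks ->
    perm_eq (ts ++ ks) (iota 0 n.+1) ->
  (exists2 ts', ts = n :: ts' & perm_eq (ts' ++ ks) (iota 0 n)) \/
  (exists2 ks', ks = rcons ks' n & perm_eq (ts ++ ks') (iota 0 n)).
Proof.
move=> sts sks pe.
have le_n x : x \in ts ++ ks -> x <= n by rewrite (perm_mem pe) mem_iota.
have iotaS : iota 0 n.+1 = iota 0 n ++ [:: n] by rewrite -addn1 iotaD.
have [nts | nts] := boolP (n \in ts); [left | right].
- case: ts nts sts pe le_n => [//|x ts'] nts sts pe le_n.
  have ts'_lt := order_path_min (rev_trans ltn_trans) sts.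
  have x_n : x = n.
    apply/eqP; move: nts; rewrite inE => /predU1P[-> // | /(allP ts'_lt) /= nx].
    by have := le_n x; rewrite inE eqxx => /(_ isT); lia.
  subst x; exists ts' => //.
  by rewrite -(perm_cons n) (perm_trans pe) // iotaS perm_catC.
- have nks : n \in ks.
    by have := perm_mem pe n; rewrite mem_cat (negbTE nts) mem_iota ltnSn.
  case/lastP: ks sks pe le_n nks => [//|ks' x] sks pe le_n nks.
  have ks'_lt : all (fun y => y < x) ks'.
    by move: sks; rewrite (sorted_pairwise ltn_trans) -cats1 pairwise_cat allrel1r => /andP[].
  have x_n : x = n.
    apply/eqP; move: nks; rewrite mem_rcons inE => /predU1P[-> // | /(allP ks'_lt) /= nx].
    by have := le_n x; rewrite mem_cat mem_rcons inE eqxx orbT => /(_ isT); lia.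
  subst x; exists ks' => //.
  by rewrite -(perm_cat2r [:: n]) -catA cats1 (perm_trans pe) // iotaS.
Qed.

Lemma uniq_perm_iota s n : uniq s -> size s = n -> (forall x, x \in s -> x < n) ->
  perm_eq s (iota 0 n).
Proof.
move=> us sz lt_n; apply: uniq_perm => //; first exact: iota_uniq.
have sub : {subset s <= iota 0 n} by move=> x /lt_n; rewrite mem_iota.
by have [] := uniq_min_size us sub; rewrite size_iota sz.
Qed.

Lemma ltn_count_sorted (T : eqType) (r : rel T) (P : pred T) x0 s i :
    transitive r -> sorted r s -> {in s &, forall x y, r x y -> P y -> P x} ->
  i < size s -> (i < count P s) = P (nth x0 s i).
Proof.
move=> r_tr; elim: s i => [//|x s IH] i srt P_mono lt_i /=.
have P_mono' : {in s &, forall x y, r x y -> P y -> P x}.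
  by move=> y z ys zs; apply: P_mono; rewrite inE ?ys ?zs orbT.
have [Px | nPx] := boolP (P x).
  by case: i lt_i => [|i] lt_i //=; rewrite add1n ltnS IH // (path_sorted srt).
have nP y : y \in s -> ~~ P y.
  move=> ys; apply: contra nPx; apply: P_mono; rewrite ?inE ?ys ?eqxx ?orbT //.
  exact: allP (order_path_min r_tr srt) y ys.
have -> : count P s = 0 by apply/eqP; rewrite -leqn0 leqNgt -has_count; apply/hasPn.
by case: i lt_i => [|i] lt_i; [rewrite (negbTE nPx) | apply/esym/negbTE/nP/mem_nth].
Qed.

Section PartitionCombinatorics.
Variable mu : seq nat.
Hypothesis smu : sorted geq mu.

Lemma leq_nth_partition i j : i <= j -> j < size mu -> nth 0 mu j <= nth 0 mu i.
Proof.
move=> le_ij lt_j; apply: (sorted_leq_nth (rev_trans leq_trans) leqnn) => //.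
by rewrite inE (leq_ltn_trans le_ij).
Qed.

Lemma ltn_conj_part t i : i < size mu -> (i < conj_part mu t) = (t <= nth 0 mu i).
Proof.
move=> lt_i; apply: (ltn_count_sorted _ (rev_trans leq_trans)) => // x y _ _.
by move=> le_yx le_ty; exact: leq_trans le_ty le_yx.
Qed.

Lemma conj_part_le_size t : conj_part mu t <= size mu.
Proof. exact: count_size. Qed.

Lemma ltn_durfee i : i < size mu -> (i < durfee mu) = (i < nth 0 mu i).
Proof.
move=> lt_i; rewrite /durfee (ltn_count_sorted 0 ltn_trans) ?iota_ltn_sorted ?size_iota //.
  by rewrite nth_iota.
move=> x y; rewrite !mem_iota => /andP[x_gt0 _] /andP[_ lt_y] lt_xy le_y.
apply: leq_trans (ltnW lt_xy) (leq_trans le_y _).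
by apply: leq_nth_partition; lia.
Qed.

Lemma durfee_le_size : durfee mu <= size mu.
Proof. by rewrite /durfee (leq_trans (count_size _ _)) ?size_iota. Qed.

Definition frob_qs := [seq frob_q mu j.+1 | j <- iota 0 (durfee mu)].

Definition durfee_offsets :=
  [seq i - nth 0 mu i | i <- iota (durfee mu) (size mu - durfee mu)].

Lemma size_frob_qs : size frob_qs = durfee mu.
Proof. by rewrite size_map size_iota. Qed.

Lemma nth_frob_qs j : j < durfee mu -> nth 0 frob_qs j = frob_q mu j.+1.
Proof. by move=> lt_j; rewrite (nth_map 0) ?size_iota // nth_iota. Qed.

Lemma nth_durfee_offsets i : durfee mu <= i < size mu ->
  nth 0 durfee_offsets (i - durfee mu) = i - nth 0 mu i.
Proof.
move=> /andP[le_di lt_i]; rewrite (nth_map 0) ?size_iota; last by lia.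
by rewrite nth_iota ?subnKC //; lia.
Qed.

Lemma sorted_frob_qs : sorted gtn frob_qs.
Proof.
apply/(sortedP 0) => j; rewrite size_frob_qs => lt_j1; rewrite !nth_frob_qs ?(ltnW lt_j1) //.
have lt_j1N := leq_trans lt_j1 durfee_le_size.
have le_conj : conj_part mu j.+2 <= conj_part mu j.+1 by apply: sub_count => x; apply: ltnW.
have := ltn_conj_part j.+2 lt_j1N; rewrite -ltn_durfee // lt_j1 /frob_q.
lia.
Qed.

Lemma sorted_durfee_offsets : sorted ltn durfee_offsets.
Proof.
apply/(sortedP 0) => k; rewrite size_map size_iota => lt_k1.
have lt_k := ltnW lt_k1.
rewrite !(nth_map 0) ?size_iota // !nth_iota // addnS.
set i := durfee mu + k.
have lt_i1 : i.+1 < size mu by lia.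
have := ltn_durfee (ltnW lt_i1); have := ltn_durfee lt_i1.
have -> : i < durfee mu = false by lia.
have -> : i.+1 < durfee mu = false by lia.
have := leq_nth_partition (leqnSn i) lt_i1.
lia.
Qed.

Lemma frob_qs_durfee_offsets_disjoint : ~~ has (mem frob_qs) durfee_offsets.
Proof.
apply/hasPn => x /mapP[i]; rewrite mem_iota => /andP[le_di lt_i] ->.
apply/mapP => -[j]; rewrite mem_iota => /andP[_ lt_j]; rewrite /frob_q.
have lt_iN : i < size mu by lia.
have mu_le_i : nth 0 mu i <= i by rewrite leqNgt -ltn_durfee // -leqNgt.
have := ltn_conj_part j.+1 lt_iN.
by have [le_jm conj_i | lt_mj /negbT conj_i] := leqP j.+1 (nth 0 mu i); lia.
Qed.

Lemma perm_frob_iota : perm_eq (frob_qs ++ durfee_offsets) (iota 0 (size mu)).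
Proof.
have le_dN := durfee_le_size.
apply: uniq_perm_iota.
- rewrite cat_uniq frob_qs_durfee_offsets_disjoint.
  rewrite (sorted_uniq (rev_trans ltn_trans) ltnn sorted_frob_qs).
  by rewrite (sorted_uniq ltn_trans ltnn sorted_durfee_offsets).
- by rewrite size_cat size_frob_qs size_map size_iota subnKC.
- move=> x; rewrite mem_cat => /orP[] /mapP[k]; rewrite mem_iota => /andP[_ lt_k] ->.
    by rewrite /frob_q; have := conj_part_le_size k.+1; lia.
  by lia.
Qed.
End PartitionCombinatorics.

Local Open Scope ring_scope.

Section UnitRowExpansion.
Variable R : comPzRingType.

Definition detF n (F : nat -> nat -> R) := \det (\matrix_(i < n, j < n) F i j).

Lemma eq_detF n F G : (forall i j, (i < n)%N -> (j < n)%N -> F i j = G i j) ->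
  detF n F = detF n G.
Proof. by move=> FG; congr (\det _); apply/matrixP => i j; rewrite !mxE FG. Qed.

Lemma detF1 F : detF 1 F = F 0%N 0%N.
Proof. by rewrite /detF det_mx11 mxE. Qed.

Lemma detF_expand_col n F (j : 'I_n.+1) : detF n.+1 F =
  \sum_(i < n.+1) F i j * (-1) ^+ (i + j) * detF n (fun k l => F (bump i k) (bump j l)).
Proof.
rewrite /detF (expand_det_col _ j); apply: eq_bigr => i _.
rewrite mxE /cofactor mulrA; congr (_ * \det _).
by apply/matrixP => k l; rewrite !mxE.
Qed.

Lemma detF_unit_last_row n F : (forall j, (j <= n)%N -> F n j = (j == n)%:R) ->
  detF n.+1 F = detF n F.
Proof.
move=> Fn; rewrite /detF (expand_det_row _ ord_max) big_ord_recr /= big1 ?add0r.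
- rewrite mxE Fn // eqxx mul1r /cofactor addnn -mul2n exprM sqrrN !expr1n mul1r.
  by congr (\det _); apply/matrixP => i j; rewrite !mxE !lift_max.
- by move=> j _; rewrite mxE Fn ?ltn_eqF ?mul0r //= ltnW.
Qed.

Definition unit_extension (c : nat -> nat -> R) d (ks : seq nat) i j : R :=
  if (i < d)%N then c i j else (j == nth 0%N ks (i - d))%:R.

Lemma unit_extension_rcons c d ks n : (d + size ks = n)%N ->
  detF n.+1 (unit_extension c d (rcons ks n)) = detF n (unit_extension c d ks).
Proof.
move=> sz; rewrite detF_unit_last_row => [|j _]; last first.
  by rewrite /unit_extension -sz ltnNge leq_addr addKn nth_rcons ltnn eqxx.
apply: eq_detF => i j lt_i _; rewrite /unit_extension nth_rcons.
by case: ifP => // le_di; have -> : (i - d < size ks)%N by lia.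
Qed.

Lemma unit_extension_expand c d ks n : (d + size ks = n)%N -> n \notin ks ->
  detF n.+1 (unit_extension c d.+1 ks) =
  \sum_(i < d.+1) c i n * (-1) ^+ (i + n) *
     detF n (unit_extension (fun k => c (bump i k)) d ks).
Proof.
move=> sz nks; rewrite (detF_expand_col _ ord_max) /=.
have le_dn : (d.+1 <= n.+1)%N by lia.
pose term i := c i n * (-1) ^+ (i + n) * detF n (unit_extension (fun k => c (bump i k)) d ks).
rewrite [RHS](big_ord_widen _ term le_dn) [RHS]big_mkcond /=.
apply: eq_bigr => i _; rewrite {1}/unit_extension; case: ifP => lt_id.
  congr (_ * _); apply: eq_detF => k l lt_k lt_l.
  rewrite /unit_extension /bump (leqNgt n l) lt_l add0n.
  case: (leqP i k) => [le_ik | lt_ki]; rewrite ?add1n ?add0n ?ltnS ?subSS //.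
  by have lt_kd := leq_trans lt_ki lt_id; rewrite lt_kd ltnW.
have lt_ks : (i - d.+1 < size ks)%N by move/negbT: lt_id; have := ltn_ord i; lia.
have /negPf -> : n != ks`_(i - d.+1).
  by apply: contraNneq nks => ->; apply: mem_nth.
by rewrite !mul0r.
Qed.

(* Listing the free columns [ts] in decreasing order is what makes the sign of
   the Laplace expansion along the unit rows split into one sign per column. *)
Lemma det_unit_extension n c ts ks :
    sorted gtn ts -> sorted ltn ks -> perm_eq (ts ++ ks) (iota 0 n) ->
  detF n (unit_extension c (size ts) ks) =
  detF (size ts) (fun i j => (-1) ^+ nth 0%N ts j * c i (nth 0%N ts j)).
Proof.
elim: n c ts ks => [|n IH] c ts ks sts sks pe.
  have /nilP -> : nilp ts by move: (perm_size pe); rewrite size_cat /nilp; case: size.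
  by rewrite /detF !det_mx00.
have [[ts' ets pe'] | [ks' eks pe']] := perm_iotaS_split sts sks pe.
- subst ts; have sz : (size ts' + size ks = n)%N.
    by rewrite -size_cat (perm_size pe') size_iota.
  have nks : n \notin ks.
    by have := perm_mem pe' n; rewrite mem_cat mem_iota add0n ltnn andbF => /norP[].
  rewrite /= unit_extension_expand // (detF_expand_col _ ord0).
  apply: eq_bigr => i _; rewrite (IH _ ts' ks (path_sorted sts) sks pe') /=.
  (* [bump 0 l] computes to [l.+1]: the two minors agree up to conversion. *)
  by rewrite addn0 exprD; ring.
- subst ks; have sz : (size ts + size ks' = n)%N.
    by rewrite -size_cat (perm_size pe') size_iota.
  have sks' : sorted ltn ks' by move: sks; rewrite -cats1 => /cat_sorted2[].
  by rewrite unit_extension_rcons // IH.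
Qed.
End UnitRowExpansion.

Section Giambelli.
Variables (A : comAlgType CC) (h : nat -> A) (a : int -> CC).

Definition hcol (j : nat) (r : int) : A := hk h r (tau (1 - (j.+1)%:Z) a).

Definition jt (pos : nat -> int) (i j : nat) : A := hcol j (pos i + (j.+1)%:Z).

Definition jt_pos (mu : seq nat) (i : nat) : int := (nth 0%N mu i)%:Z - (i.+1)%:Z.

Lemma schur_aE mu : schur_a h mu a = detF (size mu) (jt (jt_pos mu)).
Proof. by []. Qed.

Lemma hcol_unit j k : (j <= k)%N -> hcol j (- (k.+1)%:Z + (j.+1)%:Z) = (j == k)%:R.
Proof.
rewrite leq_eqVlt => /predU1P[-> | lt_jk]; first by rewrite eqxx addNr.
have -> : - (k.+1)%:Z + (j.+1)%:Z = Negz (k - j).-1 by rewrite NegzE; lia.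
by rewrite ltn_eqF.
Qed.

Lemma detF_jt_pad m n pos : (m <= n)%N ->
    (forall i, (m <= i < n)%N -> pos i = - (i.+1)%:Z) ->
  detF n (jt pos) = detF m (jt pos).
Proof.
elim: n => [|n IH] le_mn pos_unit; first by case: m le_mn {pos_unit}.
move: le_mn; rewrite leq_eqVlt => /predU1P[-> // | lt_mn].
rewrite detF_unit_last_row ?IH // => [i /andP[le_mi lt_in] | j le_jn].
  by apply: pos_unit; rewrite le_mi ltnW.
by rewrite /jt pos_unit ?hcol_unit // ltnSn andbT -ltnS.
Qed.

Lemma jt_pos_frob_p mu i : sorted geq mu -> (i < durfee mu)%N ->
  jt_pos mu i = (frob_p mu i.+1)%:Z.
Proof.
move=> smu lt_id; have lt_iN := leq_trans lt_id (durfee_le_size mu).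
have lt_imu : (i < nth 0%N mu i)%N by rewrite -ltn_durfee.
by rewrite /jt_pos /frob_p /=; lia.
Qed.

Section Reduction.
Variable n : nat.

Definition jt_empty : 'M[A]_n.+1 := \matrix_(i, j) jt (fun i => - (i.+1)%:Z) i j.

Lemma det_jt_empty : \det jt_empty = 1.
Proof.
rewrite -det_tr det_trig.
  by rewrite big1 // => i _; rewrite !mxE /jt hcol_unit // eqxx.
by apply/is_trig_mxP => i j lt_ij; rewrite !mxE /jt hcol_unit ?(ltnW lt_ij) ?ltn_eqF.
Qed.

Definition jt_empty_inv := \adj jt_empty.

Lemma mulmx_jt_empty_inv : jt_empty *m jt_empty_inv = 1%:M.
Proof. by rewrite mul_mx_adj det_jt_empty. Qed.

Lemma det_jt_empty_inv : \det jt_empty_inv = 1.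
Proof.
have := det_mulmx jt_empty jt_empty_inv.
by rewrite mulmx_jt_empty_inv det1 det_jt_empty mul1r.
Qed.

Definition reduced_row (p : int) (j : nat) : A :=
  \sum_(l < n.+1) hcol l (p + (l.+1)%:Z) * jt_empty_inv l (inord j).

Lemma reduced_row_unit k j : (k <= n)%N -> (j <= n)%N ->
  reduced_row (- (k.+1)%:Z) j = (j == k)%:R.
Proof.
move=> le_kn le_jn; transitivity ((jt_empty *m jt_empty_inv) (inord k) (inord j)).
  by rewrite !mxE; apply: eq_bigr => l _; rewrite !mxE /jt inordK.
by rewrite mulmx_jt_empty_inv !mxE -val_eqE /= !inordK // eq_sym.
Qed.

Lemma detF_jt_reduced pos :
  detF n.+1 (jt pos) = detF n.+1 (fun i j => reduced_row (pos i) j).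
Proof.
rewrite /detF -[LHS]mulr1 -det_jt_empty_inv -det_mulmx; congr (\det _).
by apply/matrixP => i j; rewrite !mxE; apply: eq_bigr => l _; rewrite !mxE inord_val.
Qed.

Lemma schur_a_hook p q : (q <= n)%N ->
  schur_a h (hook p q) a = (-1) ^+ q * reduced_row p%:Z q.
Proof.
move=> le_qn; pose ks := [seq bump q r | r <- iota 0 n].
have sks : sorted ltn ks.
  apply/(sortedP 0) => r; rewrite size_map size_iota => lt_r1.
  have lt_r := ltnW lt_r1.
  by rewrite !(nth_map 0%N) ?size_iota ?nth_iota // /bump; lia.
have pe : perm_eq ([:: q] ++ ks) (iota 0 n.+1).
  apply: uniq_perm_iota => [||x].
  - rewrite /= (map_inj_uniq (can_inj (bumpK q))) iota_uniq andbT.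
    by apply/mapP => -[r _ /eqP]; rewrite (negbTE (neq_bump q r)).
  - by rewrite /= size_map size_iota.
  - by rewrite inE => /predU1P[-> | /mapP[r]]; rewrite ?mem_iota /bump; lia.
rewrite schur_aE /= size_nseq -(@detF_jt_pad _ n.+1) //; last first.
  move=> [|r] // /andP[lt_qr _].
  by rewrite /jt_pos /= nth_nseq ltnNge -ltnS lt_qr sub0r.
rewrite detF_jt_reduced.
transitivity (detF n.+1 (unit_extension (fun _ => reduced_row p) 1 ks)).
  apply: eq_detF => -[|r] j lt_r lt_j; rewrite /unit_extension /=.
    by congr reduced_row; rewrite /jt_pos /=; lia.
  rewrite subn1 /= (nth_map 0) ?size_iota ?nth_iota // add0n.
  rewrite -(@reduced_row_unit (bump q r)) //; last by rewrite /bump; lia.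
  by congr reduced_row; rewrite /jt_pos /= nth_nseq /bump; case: ltnP; lia.
by rewrite (@det_unit_extension _ _ _ [:: q]) //= detF1.
Qed.

Lemma schur_a_reduced mu : sorted geq mu -> size mu = n.+1 ->
  schur_a h mu a = detF (durfee mu) (fun i j =>
    (-1) ^+ nth 0%N (frob_qs mu) j * reduced_row (jt_pos mu i) (nth 0%N (frob_qs mu) j)).
Proof.
move=> smu szmu; have pe := perm_frob_iota smu; rewrite szmu in pe.
rewrite -(size_frob_qs mu) -(det_unit_extension (fun i => reduced_row (jt_pos mu i))
  (sorted_frob_qs smu) (sorted_durfee_offsets smu) pe).
rewrite schur_aE szmu detF_jt_reduced; apply: eq_detF => i j lt_i lt_j.
rewrite /unit_extension size_frob_qs; case: ltnP => // le_di.
rewrite nth_durfee_offsets ?le_di ?szmu //.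
have mu_le_i : (nth 0%N mu i <= i)%N by rewrite leqNgt -ltn_durfee ?szmu // -leqNgt.
by rewrite -reduced_row_unit; [congr reduced_row; rewrite /jt_pos; lia | lia | lia].
Qed.

End Reduction.
End Giambelli.

Theorem theorem5 (A : comAlgType CC) (h : nat -> A) (Hh : alg_indep h)
    (a : int -> CC) (mu : seq nat) (Hmu : is_partition mu) :
  schur_a h mu a =
  \det (\matrix_(i < durfee mu, j < durfee mu)
          schur_a h (hook (frob_p mu i.+1) (frob_q mu j.+1)) a).
Proof.
case/andP: Hmu => smu _.
case szmu: (size mu) => [|n].
  by move/size0nil: szmu => ->; rewrite /schur_a !det_mx00.
rewrite (schur_a_reduced h a smu szmu) /detF; congr (\det _); apply/matrixP => i j.
rewrite !mxE nth_frob_qs // (@schur_a_hook _ h a n) ?jt_pos_frob_p //.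
by rewrite /frob_q; have := conj_part_le_size mu j.+1; lia.
Qed.
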